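(* Let $(\mathbb X,d,\delta)$ be a uniform dilation structure and $x\in\mathbb X$. Then there are $r>0$ and $\varepsilon_0>0$ such that for all $\varepsilon\in(0,\varepsilon_0]$ and all $u,v\in B^d(x,r)$ the expression $\Sigma^x_\varepsilon(u,v)=\delta^x_{\varepsilon^{-1}}\delta^{\delta^x_\varepsilon u}_\varepsilon v$ is defined and belongs to $U(x)$.
   Context: A quasimetric space $(\mathbb X,d)$ is a topological space $\mathbb X$ with a map $d:\mathbb X\times\mathbb X\to[0,\infty)$ such that: (i) $d(u,v)=0$ iff $u=v$; (ii) $d(u,v)\le c_{\mathbb X}\,d(v,u)$ for a constant $1\le c_{\mathbb X}<\infty$; (iii) $d(u,v)\le Q_{\mathbb X}(d(u,w)+d(w,v))$ for a constant $1\le Q_{\mathbb X}<\infty$; (iv) $d$ is upper semicontinuous in the first argument. The topology of $\mathbb X$ coincides with the one induced by $d$. $B^d(x,r)=\{y: d(y,x)<r\}$, $\bar B^d(x,r)$ its closure; boundedly compact means closed bounded sets are compact. A dilation structure $(\mathbb X,d,\delta)$ is a complete boundedly compact quasimetric space with $d$ continuous in both arguments, satisfying: (A0) For every $x$ and $\varepsilon\in(0,1]$ there are a neighborhood $U(x)$ of $x$ and homeomorphisms $\delta^x_\varepsilon:U(x)\to V_\varepsilon(x)$, $\delta^x_{\varepsilon^{-1}}:W_{\varepsilon^{-1}}(x)\to U(x)$ with $V_\varepsilon(x)\subseteq W_{\varepsilon^{-1}}(x)\subseteq U(x)$; the family is continuous in $\varepsilon$; there is $R>0$ with $\bar B^d(x,R)\subseteq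 U(x)$ for all $x$, and for all $\varepsilon<1$, $\tilde r>0$ with $\bar B^d(x,\tilde r)\subseteq U(x)$: $B^d(x,\tilde r\varepsilon)\subseteq\delta^x_\varepsilon B^d(x,\tilde r)\subset B^d(x,\tilde r)$. (A1) $\delta^x_\varepsilon x=x$, $\delta^x_1=\mathrm{id}$, $\lim_{\varepsilon\to0}\delta^x_\varepsilon y=x$ for $y\in U(x)$. (A2) $\delta^x_\varepsilon\delta^x_\mu u=\delta^x_{\varepsilon\mu}u$ whenever both sides are defined. (A3) $d^x(u,v)=\lim_{\varepsilon\to0}\frac1\varepsilon d(\delta^x_\varepsilon u,\delta^x_\varepsilon v)$ exists uniformly in $u,v\in\bar B^d(x,R)$. The dilation structure is uniform if the convergence in (A3) is also uniform in $x$ in any compact set. $\Sigma^x_\varepsilon(u,v)$ being defined means $v\in U(\delta^x_\varepsilon u)$ and $\delta^{\delta^x_\varepsilon u}_\varepsilon v\in W_{\varepsilon^{-1}}(x)$. *)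

From Stdlib Require Import Reals List.
Open Scope R_scope.
Set Implicit Arguments.

Section QuasiMetric.
Variable X : Type.
Variable d : X -> X -> R.

Definition ball (x : X) (r : R) : X -> Prop := fun y => d y x < r.

Definition dopen (O : X -> Prop) : Prop :=
  forall y, O y -> exists r, 0 < r /\ forall z, ball y r z -> O z.

Definition dnbhd (A : X -> Prop) (x : X) : Prop :=
  exists O, dopen O /\ O x /\ forall y, O y -> A y.

Definition dclosure (A : X -> Prop) : X -> Prop :=
  fun y => forall O, dopen O -> O y -> exists a, O a /\ A a.

Definition cball (x : X) (r : R) : X -> Prop := dclosure (ball x r).

Definition dclosed (A : X -> Prop) : Prop := dopen (fun y => ~ A y).

Definition dbounded (A : X -> Prop) : Prop :=
  exists x r, forall y, A y -> ball x r y.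

Definition dcompact (K : X -> Prop) : Prop :=
  forall (I : Type) (O : I -> X -> Prop),
    (forall i, dopen (O i)) ->
    (forall y, K y -> exists i, O i y) ->
    exists l : list I, forall y, K y -> exists i, In i l /\ O i y.

Definition boundedly_compact : Prop :=
  forall A, dclosed A -> dbounded A -> dcompact A.

Definition dcauchy (s : nat -> X) : Prop :=
  forall eta, 0 < eta -> exists N, forall m n, (N <= m)%nat -> (N <= n)%nat ->
    d (s m) (s n) < eta.

Definition dconverges (s : nat -> X) (l : X) : Prop :=
  forall eta, 0 < eta -> exists N, forall n, (N <= n)%nat -> d (s n) l < eta.

Definition dcomplete : Prop :=
  forall s, dcauchy s -> exists l, dconverges s l.

Definition quasimetric : Prop :=
  (forall u v, 0 <= d u v) /\
  (forall u v, d u v = 0 <-> u = v) /\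
  (exists c, 1 <= c /\ forall u v, d u v <= c * d v u) /\
  (exists Q, 1 <= Q /\ forall u v w, d u v <= Q * (d u w + d w v)) /\
  (forall u v eta, 0 < eta ->
     exists O, dopen O /\ O u /\ forall u', O u' -> d u' v < d u v + eta).

Definition d_continuous : Prop :=
  forall a b eta, 0 < eta ->
    exists O1 O2, dopen O1 /\ dopen O2 /\ O1 a /\ O2 b /\
      forall a' b', O1 a' -> O2 b' -> Rabs (d a' b' - d a b) < eta.

Definition homeo (f : X -> X) (A B : X -> Prop) : Prop :=
  (forall a, A a -> B (f a)) /\
  (forall a a', A a -> A a' -> f a = f a' -> a = a') /\
  (forall b, B b -> exists a, A a /\ f a = b) /\
  (forall a, A a -> forall O, dopen O -> O (f a) ->
     exists O', dopen O' /\ O' a /\ forall y, O' y -> A y -> O (f y)) /\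
  (* relative openness, i.e. continuity of the inverse on B *)
  (forall O, dopen O -> exists O', dopen O' /\
     forall b, B b -> ((exists a, A a /\ O a /\ f a = b) <-> O' b)).

End QuasiMetric.

Section Dilations.
Variable X : Type.
Variable d : X -> X -> R.
(* delta x t y = \delta^x_t y, t > 0 *)
Variable delta : X -> R -> X -> X.
Variable U : X -> X -> Prop.
Variable V : X -> R -> X -> Prop.       (* V x eps = V_eps(x), eps in (0,1] *)
Variable W : X -> R -> X -> Prop.       (* W x t = W_t(x), t = eps^{-1} >= 1 *)

Definition ddom (x : X) (t : R) : X -> Prop :=
  if Rle_dec t 1 then U x else W x t.

Definition axioms_A0_A2 (R0 : R) : Prop :=
  (forall x, dnbhd d (U x) x) /\
  (forall x eps, 0 < eps <= 1 ->
     homeo d (delta x eps) (U x) (V x eps) /\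
     homeo d (delta x (/ eps)) (W x (/ eps)) (U x) /\
     (forall y, V x eps y -> W x (/ eps) y) /\
     (forall y, W x (/ eps) y -> U x y)) /\
  (forall x y, U x y -> forall eps, 0 < eps <= 1 ->
     forall O, dopen d O -> O (delta x eps y) ->
       exists eta, 0 < eta /\ forall eps', 0 < eps' <= 1 -> Rabs (eps' - eps) < eta ->
         O (delta x eps' y)) /\
  (forall x y, cball d x R0 y -> U x y) /\
  (forall x eps rt, 0 < eps < 1 -> 0 < rt -> (forall y, cball d x rt y -> U x y) ->
     (forall y, ball d x (rt * eps) y -> exists z, ball d x rt z /\ delta x eps z = y) /\
     (forall z, ball d x rt z -> ball d x rt (delta x eps z))) /\
  (forall x eps, 0 < eps -> ddom x eps x -> delta x eps x = x) /\
  (forall x y, U x y -> delta x 1 y = y) /\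
  (forall x y, U x y -> forall O, dopen d O -> O x ->
     exists eta, 0 < eta /\ forall eps, 0 < eps < eta -> eps <= 1 -> O (delta x eps y)) /\
  (forall x eps mu u, 0 < eps -> 0 < mu ->
     ddom x mu u -> ddom x eps (delta x mu u) -> ddom x (eps * mu) u ->
     delta x eps (delta x mu u) = delta x (eps * mu) u).

Definition axiom_A3 (R0 : R) : Prop :=
  exists dx : X -> X -> X -> R,
    forall x eta, 0 < eta -> exists e1, 0 < e1 /\
      forall eps u v, 0 < eps < e1 -> eps <= 1 ->
        cball d x R0 u -> cball d x R0 v ->
        Rabs (d (delta x eps u) (delta x eps v) / eps - dx x u v) < eta.

Definition axiom_A3_uniform (R0 : R) : Prop :=
  exists dx : X -> X -> X -> R,
    forall K, dcompact d K -> forall eta, 0 < eta -> exists e1, 0 < e1 /\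
      forall x eps u v, K x -> 0 < eps < e1 -> eps <= 1 ->
        cball d x R0 u -> cball d x R0 v ->
        Rabs (d (delta x eps u) (delta x eps v) / eps - dx x u v) < eta.

Definition dilation_structure : Prop :=
  quasimetric d /\ dcomplete d /\ boundedly_compact d /\ d_continuous d /\
  exists R0, 0 < R0 /\ axioms_A0_A2 R0 /\ axiom_A3 R0.

Definition uniform_dilation_structure : Prop :=
  quasimetric d /\ dcomplete d /\ boundedly_compact d /\ d_continuous d /\
  exists R0, 0 < R0 /\ axioms_A0_A2 R0 /\ axiom_A3 R0 /\ axiom_A3_uniform R0.

End Dilations.

(* Uniform (A3) bounds [d (delta^y_e z) y] by [e * C] uniformly for [y] in the compact
   ball [cball x R0], and by [e * mu * C] when [z] lies in the smaller ball
   [B(y, R0 mu)], since such a [z] is [delta^y_mu] of a point of [B(y, R0)].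
   Hence for [u, v] close to [x] the point [y = delta^x_eps u] stays within
   [eps mu C] of [x], [v] stays in [B(y, R0 mu)], and [w = delta^y_eps v] lands in
   [B(x, R0 eps)], which (A0) identifies with an image [delta^x_eps B(x, R0)] inside
   [V_eps(x)]; there [delta^x_{1/eps}] is defined and takes values in [U(x)]. *)
From Stdlib Require Import Reals Lra Psatz Classical.
Open Scope R_scope.
Set Implicit Arguments.

Section QuasiMetricBalls.
Variables (X : Type) (d : X -> X -> R).

Lemma ball_cball x r y : ball d x r y -> cball d x r y.
Proof. intros Hy O _ HO. exists y. auto. Qed.

Lemma cball_closed x r : dclosed d (cball d x r).
Proof.
  intros y Hny.
  apply not_all_ex_not in Hny as [O HO].
  apply imply_to_and in HO as [HOopen HO].
  apply imply_to_and in HO as [HOy HO].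
  destruct (HOopen y HOy) as [rho [Hrho Hsub]].
  exists rho; split; [exact Hrho|].
  intros z Hz Hcz. exact (HO (Hcz O HOopen (Hsub z Hz))).
Qed.

Lemma cball_bounded x r : d_continuous d -> dbounded d (cball d x r).
Proof.
  intros Hdc. exists x, (r + 1). intros y Hy.
  destruct (Hdc y x 1 Rlt_0_1) as [O1 [O2 [HO1 [_ [Hy1 [Hx2 Hnear]]]]]].
  destruct (Hy O1 HO1 Hy1) as [a [Ha1 Ha]].
  specialize (Hnear a x Ha1 Hx2). unfold ball in *.
  apply Rabs_def2 in Hnear. lra.
Qed.

Lemma cball_compact x r :
  boundedly_compact d -> d_continuous d -> dcompact d (cball d x r).
Proof.
  intros Hbc Hdc. apply Hbc; [apply cball_closed | apply cball_bounded, Hdc].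
Qed.

Lemma quasi_triangle_lt c Q v x y a b :
  0 <= c -> 0 < Q ->
  (forall u v, d u v <= c * d v u) ->
  (forall u v w, d u v <= Q * (d u w + d w v)) ->
  d v x < a -> d y x < b -> d v y < Q * (a + c * b).
Proof.
  intros Hc0 HQ0 Hc HQ Hvx Hyx.
  assert (Hxy : d x y <= c * b) by (pose proof (Hc x y); nra).
  pose proof (HQ v y x). nra.
Qed.

End QuasiMetricBalls.

Section Dilations.
Variables (X : Type) (d : X -> X -> R) (delta : X -> R -> X -> X).
Variables (U : X -> X -> Prop) (V W : X -> R -> X -> Prop) (R0 : R).
Hypothesis dist_self : forall y, d y y = 0.
Hypothesis R0_gt0 : 0 < R0.
Hypothesis HA : axioms_A0_A2 d delta U V W R0.

Lemma ball_center y : ball d y R0 y.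
Proof. unfold ball. rewrite dist_self. exact R0_gt0. Qed.

Lemma cball_sub_U y z : cball d y R0 z -> U y z.
Proof. destruct HA as [_ [_ [_ [HcU _]]]]. exact (HcU y z). Qed.

Lemma ball_sub_U y z : ball d y R0 z -> U y z.
Proof. intros Hz. apply cball_sub_U, ball_cball, Hz. Qed.

Lemma ddom_le y e z : e <= 1 -> U y z -> ddom U W y e z.
Proof. intros He Hz. unfold ddom. destruct (Rle_dec e 1); [exact Hz | lra]. Qed.

Lemma dilation_center y e : 0 < e <= 1 -> delta y e y = y.
Proof.
  destruct HA as [_ [_ [_ [_ [_ [Hfix _]]]]]].
  intros He. apply Hfix; [lra|]. apply ddom_le; [lra|]. apply ball_sub_U, ball_center.
Qed.

Lemma dilation_ball_contract y e z :
  0 < e < 1 -> ball d y R0 z -> ball d y R0 (delta y e z).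
Proof.
  destruct HA as [_ [_ [_ [_ [Hball _]]]]].
  intros He. exact (proj2 (Hball y e R0 He R0_gt0 (fun z => @cball_sub_U y z)) z).
Qed.

Lemma dilation_ball_onto y e w :
  0 < e < 1 -> ball d y (R0 * e) w -> exists z, ball d y R0 z /\ delta y e z = w.
Proof.
  destruct HA as [_ [_ [_ [_ [Hball _]]]]].
  intros He. exact (proj1 (Hball y e R0 He R0_gt0 (fun z => @cball_sub_U y z)) w).
Qed.

Lemma dilation_mul y e mu z :
  0 < e <= 1 -> 0 < mu < 1 -> ball d y R0 z ->
  delta y e (delta y mu z) = delta y (e * mu) z.
Proof.
  destruct HA as [_ [_ [_ [_ [_ [_ [_ [_ Hsemigroup]]]]]]]].
  intros He Hmu Hz. apply Hsemigroup; try lra; apply ddom_le; try nra.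
  - apply ball_sub_U, Hz.
  - apply ball_sub_U, dilation_ball_contract; assumption.
  - apply ball_sub_U, Hz.
Qed.

Lemma dilation_inverse_defined x eps w :
  0 < eps < 1 -> ball d x (R0 * eps) w ->
  W x (/ eps) w /\ U x (delta x (/ eps) w).
Proof.
  destruct HA as [_ [Hhomeo _]].
  intros Heps Hw.
  destruct (dilation_ball_onto Heps Hw) as [z [Hz <-]].
  destruct (Hhomeo x eps ltac:(lra)) as [[HUV _] [[HWU _] [HVW _]]].
  assert (HW : W x (/ eps) (delta x eps z)) by apply HVW, HUV, ball_sub_U, Hz.
  split; [exact HW | exact (HWU _ HW)].
Qed.

Section UniformA3.
Hypothesis HA3 : axiom_A3_uniform d delta R0.

(* Compare with the fixed scale [e2]: (A3) ties [d (delta^y_e z) y / e] to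
   [d^y(z, y)], which at scale [e2] is below [R0 / e2 + 1] by contraction. *)
Lemma dilation_dist_linear K :
  dcompact d K ->
  exists e1 C, 0 < e1 <= 1 /\ 0 < C /\
    forall y z e, K y -> ball d y R0 z -> 0 < e < e1 -> d (delta y e z) y < e * C.
Proof.
  intros HK. destruct HA3 as [dx Hdx].
  destruct (Hdx K HK 1 Rlt_0_1) as [e1 [He1 Hclose]].
  set (e1' := Rmin e1 1).
  assert (He1' : 0 < e1' <= 1 /\ e1' <= e1)
    by (unfold e1'; split; [split; [apply Rmin_glb_lt; lra | apply Rmin_r] | apply Rmin_l]).
  set (e2 := e1' / 2).
  exists e1', (R0 / e2 + 2).
  assert (He2 : 0 < e2) by (unfold e2; lra).
  assert (HR0e2 : 0 < R0 / e2) by (apply Rdiv_lt_0_compat; lra).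
  split; [exact (proj1 He1')|]. split; [lra|].
  intros y z e Hy Hz He.
  assert (Hyc : cball d y R0 y) by apply ball_cball, ball_center.
  assert (Hzc : cball d y R0 z) by apply ball_cball, Hz.
  assert (He_close := Hclose y e z y Hy ltac:(lra) ltac:(lra) Hzc Hyc).
  assert (He2_close := Hclose y e2 z y Hy ltac:(unfold e2; lra) ltac:(unfold e2; lra) Hzc Hyc).
  rewrite (dilation_center y (e := e)) in He_close by lra.
  rewrite (dilation_center y (e := e2)) in He2_close by (unfold e2; lra).
  apply Rabs_def2 in He_close. apply Rabs_def2 in He2_close.
  assert (Hcontract := dilation_ball_contract (e := e2) ltac:(unfold e2; lra) Hz).
  unfold ball in Hcontract.
  assert (d (delta y e2 z) y / e2 < R0 / e2)
    by (apply Rmult_lt_compat_r; [apply Rinv_0_lt_compat|]; lra).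
  replace (d (delta y e z) y) with (e * (d (delta y e z) y / e)) by (field; lra).
  apply Rmult_lt_compat_l; lra.
Qed.

End UniformA3.

Section SmallScales.
Variables (K : X -> Prop) (e1 C : R).
Hypothesis e1_le1 : e1 <= 1.
Hypothesis dist_linear :
  forall y z e, K y -> ball d y R0 z -> 0 < e < e1 -> d (delta y e z) y < e * C.

Lemma dilation_dist_small_ball y v e mu :
  K y -> 0 < mu < 1 -> ball d y (R0 * mu) v -> 0 < e < e1 ->
  d (delta y e v) y < e * mu * C.
Proof.
  intros Hy Hmu Hv He.
  destruct (dilation_ball_onto Hmu Hv) as [z [Hz <-]].
  rewrite dilation_mul by (assumption || lra).
  apply dist_linear; auto. split; nra.
Qed.

Variables (x : X) (c Q : R).
Hypothesis e1_gt0 : 0 < e1.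
Hypothesis C_gt0 : 0 < C.
Hypothesis cball_in_K : forall y, cball d x R0 y -> K y.
Hypothesis c_ge1 : 1 <= c.
Hypothesis Q_ge1 : 1 <= Q.
Hypothesis d_sym_bound : forall u v, d u v <= c * d v u.
Hypothesis d_triangle : forall u v w, d u v <= Q * (d u w + d w v).

(* [2 Q mu C <= R0] puts [w] in [B(x, R0 eps)]; [v] stays in [B(y, R0 mu)] because
   [Q r] and [Q c eps mu C] (the contribution of the displacement of [y]) each use
   half of [R0 mu]. *)
Lemma sigma_defined_near :
  exists r eps0, 0 < r /\ 0 < eps0 /\
    forall eps u v, 0 < eps <= eps0 -> ball d x r u -> ball d x r v ->
      U x u /\
      U (delta x eps u) v /\
      W x (/ eps) (delta (delta x eps u) eps v) /\
      U x (delta x (/ eps) (delta (delta x eps u) eps v)).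
Proof.
  set (D := 2 * Q * C + 2 * R0).
  assert (HD : 2 * Q * C < D /\ 2 * R0 < D) by (unfold D; split; nra).
  set (mu := R0 / D).
  assert (HmuD : mu * D = R0) by (unfold mu; field; lra).
  assert (Hmu : 0 < mu < 1 /\ 2 * Q * mu * C <= R0).
  { assert (0 < mu) by (apply Rdiv_lt_0_compat; nra). split; [split|]; nra. }
  set (r := R0 * mu / (2 * Q)).
  assert (Hr : 0 < r /\ 2 * Q * r = R0 * mu) by (unfold r; split; [apply Rdiv_lt_0_compat|field]; nra).
  set (eps0 := Rmin (e1 / 2) (R0 / (2 * Q * c * C))).
  assert (HQcC : 0 < Q * c * C) by (assert (0 < Q * c) by nra; nra).
  assert (Heps0 : 0 < eps0 /\ eps0 <= e1 / 2 /\ 2 * Q * c * C * eps0 <= R0).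
  { unfold eps0. split; [apply Rmin_glb_lt; [lra | apply Rdiv_lt_0_compat; lra]|].
    split; [apply Rmin_l|].
    assert (Rmin (e1 / 2) (R0 / (2 * Q * c * C)) <= R0 / (2 * Q * c * C)) by apply Rmin_r.
    replace R0 with (2 * Q * c * C * (R0 / (2 * Q * c * C))) at 2 by (field; lra). nra. }
  exists r, eps0. split; [lra|]. split; [lra|].
  intros eps u v Heps Hu Hv. unfold ball in Hu, Hv.
  assert (Heps1 : 0 < eps < 1) by lra.
  assert (Hx : K x).
  { apply cball_in_K. apply ball_cball. apply ball_center. }
  assert (Hy_near : d (delta x eps u) x < eps * mu * C)
    by (apply dilation_dist_small_ball; [exact Hx | lra | unfold ball; nra | lra]).
  set (y := delta x eps u) in *.
  assert (Hshift : Q * c * C * eps * mu <= R0 / 2 * mu).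
  { apply Rmult_le_compat_r; [lra|]. nra. }
  assert (Hy : K y).
  { apply cball_in_K, ball_cball, dilation_ball_contract; [lra|]. unfold ball. nra. }
  assert (Hvy : ball d y (R0 * mu) v).
  { assert (Hlt : d v y < Q * (r + c * (eps * mu * C))).
    { apply quasi_triangle_lt with x; try lra; assumption. }
    unfold ball. nra. }
  assert (Hw_near : d (delta y eps v) y < eps * mu * C)
    by (apply dilation_dist_small_ball; auto; lra).
  set (w := delta y eps v) in *.
  assert (Hwx : ball d x (R0 * eps) w).
  { unfold ball. pose proof (d_triangle w x y). nra. }
  destruct (dilation_inverse_defined Heps1 Hwx) as [HW HU].
  repeat split; [apply ball_sub_U; unfold ball; nra | | exact HW | exact HU].
  apply ball_sub_U. unfold ball in Hvy |- *. nra.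
Qed.

End SmallScales.
End Dilations.

Theorem proposition4 (X : Type) (d : X -> X -> R) (delta : X -> R -> X -> X)
  (U : X -> X -> Prop) (V W : X -> R -> X -> Prop) :
  uniform_dilation_structure d delta U V W ->
  forall x : X, exists r eps0, 0 < r /\ 0 < eps0 /\
    forall eps u v, 0 < eps <= eps0 -> ball d x r u -> ball d x r v ->
      U x u /\
      U (delta x eps u) v /\
      W x (/ eps) (delta (delta x eps u) eps v) /\
      U x (delta x (/ eps) (delta (delta x eps u) eps v)).
Proof.
  intros [Hqm [_ [Hbc [Hdc [R0 [HR0 [HA [_ HA3]]]]]]]] x.
  destruct Hqm as [_ [Hzero [[c [Hc1 Hc]] [[Q [HQ1 HQ]] _]]]].
  assert (Hd0 : forall y, d y y = 0) by (intro y; apply Hzero; reflexivity).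
  destruct (dilation_dist_linear Hd0 HR0 HA HA3 (@cball_compact _ d x R0 Hbc Hdc))
    as [e1 [C [He1 [HC Hlin]]]].
  exact (sigma_defined_near Hd0 HR0 HA (cball d x R0) (proj2 He1) Hlin (proj1 He1) HC
           (fun y Hy => Hy) Hc1 HQ1 Hc HQ).
Qed.
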